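(* For a suitable realisation of a local affine Gaudin model (setting below), whose twist function $\varphi$ has simple zeros $\zeta_1,\dots,\zeta_M$, the momentum $\mathcal P_{\mathcal A}$ of the algebra of observables satisfies $\mathcal P_{\mathcal A}=\sum_{i=1}^M\mathcal Q_i$, where $\mathcal Q_i=-\frac{1}{2\varphi'(\zeta_i)}\int_{\mathbb D}dx\,\kappa\big(\Gamma(\zeta_i,x),\Gamma(\zeta_i,x)\big)$.
   Context: $\mathfrak g$: finite-dimensional simple complex Lie algebra, $\kappa$: minus its Killing form, $C_{12}=I_a\otimes I^a$ for dual bases w.r.t. $\kappa$; $\mathfrak g_0$: real form, fixed points of an antilinear involution $\tau$. $\mathbb D$ is $\mathbb R$ or the circle; $\delta'_{xy}=\partial_x\delta(x-y)$. Data: a finite set of sites $\Sigma=\Sigma_r\sqcup\Sigma_c\sqcup\bar\Sigma_c$ (real sites, complex sites, their conjugates $\bar\alpha$), multiplicities $m_\alpha\ge1$ ($m_{\bar\alpha}=m_\alpha$), levels $\ell^\alpha_{[p]}$, $0\le p\le m_\alpha-1$ (real for real sites, $\ell^{\bar\alpha}_{[p]}=\overline{\ell^\alpha_{[p]}}$), with $\ell^\alpha_{[m_\alpha-1]}\neq0$; pairwise distinct positions $z_\alpha$ (real for real sites, $z_{\bar\alpha}=\overline{z_\alpha}$); a real $\ell^\infty\neq0$. A realisation is a Poisson algebra $\mathcal A$ of local observables of a field theory on $\mathbb D$ containing $\mathfrak g$-valued fields $\mathcal J^\alpha_{[p]}(x)$ with $\{\mathcal J^\alpha_{[p]}{}_1(x),\mathcal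 J^\beta_{[q]}{}_2(y)\}=\delta_{\alpha\beta}([C_{12},\mathcal J^\alpha_{[p+q]}{}_1(x)]\delta_{xy}-\ell^\alpha_{[p+q]}C_{12}\delta'_{xy})$ if $p+q<m_\alpha$ and $0$ otherwise, $\tau(\mathcal J^\alpha_{[p]})=\mathcal J^\alpha_{[p]}$ for real $\alpha$ and $\tau(\mathcal J^\alpha_{[p]})=\mathcal J^{\bar\alpha}_{[p]}$ for complex $\alpha$. Twist function $\varphi(z)=\sum_{\alpha\in\Sigma}\sum_{p=0}^{m_\alpha-1}\frac{\ell^\alpha_{[p]}}{(z-z_\alpha)^{p+1}}-\ell^\infty$; Gaudin Lax matrix $\Gamma(z,x)=\sum_{\alpha}\sum_p\frac{\mathcal J^\alpha_{[p]}(x)}{(z-z_\alpha)^{p+1}}$; $M=\sum_\alpha m_\alpha$. For each $\alpha$, the numbers $\eta^\alpha_{[p]}$, $0\le p\le 2m_\alpha-2$, are the unique solution of $\sum_{p=0}^{m_\alpha-1-r}\eta^\alpha_{[p+q]}\ell^\alpha_{[p+r]}=\delta_{q,r}$ for all $q,r\in\{0,\dots,m_\alpha-1\}$, and $\mathcal D^\alpha_{[p]}=\frac12\sum_{q,r=0,\,q+r\ge p}^{m_\alpha-1}\eta^\alpha_{[q+r-p]}\int_{\mathbb D}dx\,\kappa(\mathcal J^\alpha_{[q]}(x),\mathcal J^\alpha_{[r]}(x))$. The momentum $\mathcal P_{\mathcal A}$ of $\mathcal A$ is the charge whose Hamiltonian flow $\{\mathcal P_{\mathcal A},\cdot\}$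 is $\partial_x$ on all fields of $\mathcal A$. The realisation is called suitable if $\sum_{\alpha\in\Sigma}\mathcal D^\alpha_{[0]}=\mathcal P_{\mathcal A}$. *)

From HB Require Import structures.
From mathcomp Require Import all_boot all_order all_algebra.
From mathcomp Require Import all_classical all_reals all_analysis.
From mathcomp Require Import complex.
Set Implicit Arguments. Unset Strict Implicit. Unset Printing Implicit Defensive.
Import Order.TTheory GRing.Theory Num.Theory.
Local Open Scope ring_scope.

Section LAG.
Variable R : realType.
Local Notation C := (R[i]).

Variable n : nat.
Local Notation g := ('rV[C]_n).

Definition evec (c : 'I_n) : g := delta_mx 0 c.

Definition is_lie_bracket (br : g -> g -> g) : Prop :=
  [/\ (forall (a : C) u v w, br (a *: u + v) w = a *: br u w + br v w),
      (forall u v, br u v = - br v u) &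
      (forall u v w, br u (br v w) + br v (br w u) + br w (br u v) = 0)].

Definition is_simple_lie (br : g -> g -> g) : Prop :=
  [/\ is_lie_bracket br,
      (exists u v, br u v != 0) &
      (forall U : 'M[C]_n,
          (forall u v, (u <= U)%MS -> (br u v <= U)%MS) ->
          (\rank U == 0)%N || (\rank U == n)%N)].

Definition ad (br : g -> g -> g) (u : g) : 'M[C]_n := lin1_mx (br u).

Definition kappa (br : g -> g -> g) (u v : g) : C := - \tr (ad br u *m ad br v).

Definition is_real_form_inv (br : g -> g -> g) (tau : g -> g) : Prop :=
  [/\ (forall (a : C) u v, tau (a *: u + v) = a^* *: tau u + tau v),
      (forall u, tau (tau u) = u) &
      (forall u v, tau (br u v) = br (tau u) (tau v))].

(* ---------- the algebra of observables A; A-valued g-fields live in A (x) g = 'rV[A]_n *)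
Variable A : comAlgType C.

Definition is_poisson (pb : A -> A -> A) : Prop :=
  [/\ (forall (a : C) x y z, pb (a *: x + y) z = a *: pb x z + pb y z),
      (forall x y, pb x y = - pb y x),
      (forall x y z, pb x (pb y z) + pb y (pb z x) + pb z (pb x y) = 0) &
      (forall x y z, pb x (y * z) = pb x y * z + y * pb x z)].

Definition is_conjA (cj : A -> A) : Prop :=
  [/\ (forall (a : C) x y, cj (a *: x + y) = a^* *: cj x + cj y),
      (forall x y, cj (x * y) = cj x * cj y),
      cj 1 = 1 &
      (forall x, cj (cj x) = x)].

Definition tauA (cj : A -> A) (tau : g -> g) (X : 'rV[A]_n) : 'rV[A]_n :=
  \row_d \sum_c cj (X 0 c) * ((tau (evec c)) 0 d)%:A.

Definition kappaL (br : g -> g -> g) (u : g) (X : 'rV[A]_n) : A :=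
  \sum_c kappa br u (evec c) *: X 0 c.
Definition kappaBr (br : g -> g -> g) (u v : g) (X : 'rV[A]_n) : A :=
  \sum_c kappa br u (br v (evec c)) *: X 0 c.
Definition kappaA (br : g -> g -> g) (X Y : 'rV[A]_n) : A :=
  \sum_c \sum_d kappa br (evec c) (evec d) *: (X 0 c * Y 0 d).

(* ---------- the space D: the line (Dk = None) or a circle of length L (Dk = Some L) *)
Definition test_fun (Dk : option R) (f : R -> R) : Prop :=
  (forall (k : nat) (x : R), derivable (iter k (@derive1 R R) f) x 1) /\
  match Dk with
  | None => exists K : R, forall x, K < `|x| -> f x = 0
  | Some L => forall x, f (x + L) = f x
  end.

Definition linear_int (intD : (R -> A) -> A) : Prop :=
  forall (a : C) (F G : R -> A),
    intD (fun x => a *: F x + G x) = a *: intD F + intD G.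

Variable S : finType.

Definition site_data (bar : S -> S) (m : S -> nat) (lev : S -> nat -> C)
    (zpos : S -> C) (linf : C) : Prop :=
  [/\ (forall a, bar (bar a) = a) /\
      (forall a, m (bar a) = m a),
      (forall a p, lev (bar a) p = (lev a p)^*),
      (forall a, zpos (bar a) = (zpos a)^*),
      (forall a, (0 < m a)%N /\ lev a (m a).-1 != 0) /\
      injective zpos &
      (linf^* = linf /\ linf != 0)].

Definition twist (m : S -> nat) (lev : S -> nat -> C) (zpos : S -> C) (linf : C)
    (z : C) : C :=
  \sum_a \sum_(p < m a) lev a p / (z - zpos a) ^+ p.+1 - linf.
Definition twist' (m : S -> nat) (lev : S -> nat -> C) (zpos : S -> C)
    (z : C) : C :=
  \sum_a \sum_(p < m a) - (p.+1%:R * lev a p) / (z - zpos a) ^+ p.+2.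

Definition smeared (br : g -> g -> g) (intD : (R -> A) -> A)
    (J : S -> nat -> R -> 'rV[A]_n) (f : R -> R) (u : g) (a : S) (p : nat) : A :=
  intD (fun x => ((f x)%:C)%C *: kappaL br u (J a p x)).

Definition current_brackets (Dk : option R) (br : g -> g -> g) (pb : A -> A -> A)
    (intD : (R -> A) -> A) (m : S -> nat) (lev : S -> nat -> C)
    (J : S -> nat -> R -> 'rV[A]_n) : Prop :=
  forall (a b : S) (p q : nat) (u v : g) (f h : R -> R),
    (p < m a)%N -> (q < m b)%N -> test_fun Dk f -> test_fun Dk h ->
    pb (smeared br intD J f u a p) (smeared br intD J h v b q) =
    if (a == b) && (p + q < m a)%N then
      intD (fun x => ((f x * h x)%:C)%C *: kappaBr br u v (J a (p + q)%N x))
      + (lev a (p + q)%N * kappa br u v) *: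
          intD (fun x => ((derive1 f x * h x)%:C)%C *: 1)
    else 0.

Definition is_momentum (Dk : option R) (br : g -> g -> g) (pb : A -> A -> A)
    (intD : (R -> A) -> A) (m : S -> nat) (J : S -> nat -> R -> 'rV[A]_n)
    (P : A) : Prop :=
  forall (a : S) (p : nat) (u : g) (f : R -> R),
    (p < m a)%N -> test_fun Dk f ->
    pb P (smeared br intD J f u a p) = - smeared br intD J (derive1 f) u a p.

Definition eta_sol (m : S -> nat) (lev : S -> nat -> C) (eta : S -> nat -> C) : Prop :=
  forall a (q r : nat), (q < m a)%N -> (r < m a)%N ->
    \sum_(p < m a - r) eta a (p + q)%N * lev a (p + r)%N = (q == r)%:R.

Definition Dcharge0 (br : g -> g -> g) (intD : (R -> A) -> A) (m : S -> nat)
    (eta : S -> nat -> C) (J : S -> nat -> R -> 'rV[A]_n) (a : S) : A :=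
  2^-1 *: \sum_(q < m a) \sum_(r < m a)
     eta a (q + r)%N *: intD (fun x => kappaA br (J a q x) (J a r x)).

Definition Gamma (m : S -> nat) (zpos : S -> C) (J : S -> nat -> R -> 'rV[A]_n)
    (z : C) (x : R) : 'rV[A]_n :=
  \sum_a \sum_(p < m a) ((z - zpos a) ^- p.+1)%:A *: J a p x.

Definition Qcharge (br : g -> g -> g) (intD : (R -> A) -> A) (m : S -> nat)
    (lev : S -> nat -> C) (zpos : S -> C) (J : S -> nat -> R -> 'rV[A]_n)
    (zeta : C) : A :=
  - (2 * twist' m lev zpos zeta)^-1 *:
      intD (fun x => kappaA br (Gamma m zpos J zeta x) (Gamma m zpos J zeta x)).

End LAG.

From HB Require Import structures.
From mathcomp Require Import all_boot all_order all_algebra.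
From mathcomp Require Import all_classical all_reals all_analysis.
From mathcomp Require Import complex.
From mathcomp Require Import ring zify.
Set Implicit Arguments. Unset Strict Implicit. Unset Printing Implicit Defensive.
Import Order.TTheory GRing.Theory Num.Theory.
Local Open Scope ring_scope.

(* Write phi = N / Pm with Pm = prod_a (X - z_a)^(m_a).  The numerator N has degree
   M = sum_a m_a, leading coefficient -linf and the simple roots zeta_i, and
   N'(zeta_i) = Pm(zeta_i) phi'(zeta_i).  Interpolating at the zeta_i, every polynomial p
   of degree < M satisfies [X^(M-1)] p = -linf sum_i p(zeta_i) / (Pm(zeta_i) phi'(zeta_i)).
   For p = Pm / prod_c (X - z_c)^(f_c) with 0 < f <= m this evaluates
   sum_i 1 / (phi'(zeta_i) prod_c (zeta_i - z_c)^(f_c)): it vanishes unless sum_c f_c = 1.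
   Hence the terms of sum_i Q_i coupling two different sites cancel, and, since
   phi(zeta_i) = 0, the moments -sum_i 1 / (phi'(zeta_i) (zeta_i - z_a)^(k+2)) solve the
   triangular system defining eta^a, so they are the eta^a_[k].  Thus
   sum_i Q_i = sum_a D^a_[0], which is P for a suitable realisation. *)

Lemma sumn_delta (S : finType) (a : S) k : (\sum_(c : S) (c == a) * k)%N = k.
Proof. by rewrite (bigD1 a) //= eqxx mul1n big1 ?addn0 // => c /negbTE ->. Qed.

Lemma sumn_subn (S : finType) (e f : S -> nat) : (forall c, f c <= e c)%N ->
  (\sum_c (e c - f c) = \sum_c e c - \sum_c f c)%N.
Proof.
move=> fe; apply/eqP; rewrite -(eqn_add2r (\sum_c f c)) subnK ?leq_sum //.
by rewrite -big_split; apply/eqP/eq_bigr => c _ /=; rewrite subnK.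
Qed.

Lemma prodr_exp_delta (F : comNzRingType) (S : finType) (x : S -> F) a k :
  \prod_c x c ^+ ((c == a) * k)%N = x a ^+ k.
Proof. by rewrite (bigD1 a) //= eqxx mul1n big1 ?mulr1 // => c /negbTE ->. Qed.

Section PolePoly.
Variables (F : fieldType) (S : finType) (z : S -> F).

Definition pole_poly (e : S -> nat) : {poly F} := \prod_c ('X - (z c)%:P) ^+ e c.

Lemma pole_poly_monic e : pole_poly e \is monic.
Proof. by apply: monic_prod => c _; rewrite monic_exp ?monicXsubC. Qed.

Lemma size_pole_poly e : size (pole_poly e) = (\sum_c e c).+1.
Proof.
rewrite /pole_poly; elim/big_rec2: _ => [|c k p _ IH]; first by rewrite size_poly1.
rewrite size_monicM ?monic_exp ?monicXsubC -?size_poly_eq0 ?IH //.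
by rewrite size_exp_XsubC addSn addnS.
Qed.

Lemma horner_pole_poly e w : (pole_poly e).[w] = \prod_c (w - z c) ^+ e c.
Proof.
by rewrite /pole_poly horner_prod; apply: eq_bigr => c _; rewrite horner_exp hornerXsubC.
Qed.

Lemma horner_pole_poly_neq0 e w : (forall c, w != z c) -> (pole_poly e).[w] != 0.
Proof.
by move=> wz; rewrite horner_pole_poly; apply/prodf_neq0 => c _; rewrite expf_neq0 ?subr_eq0.
Qed.

Lemma horner_pole_poly_subn e f w : (forall c, f c <= e c)%N -> (forall c, w != z c) ->
  (pole_poly (fun c => e c - f c)%N).[w] = (pole_poly e).[w] / (pole_poly f).[w].
Proof.
move=> fe wz; apply: (mulIf (horner_pole_poly_neq0 f wz)); rewrite divfK ?horner_pole_poly_neq0 //.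
by rewrite !horner_pole_poly -big_split; apply: eq_bigr => c _ /=; rewrite -exprD subnK.
Qed.

Lemma coef_pole_poly_subn e f : (forall c, f c <= e c)%N -> (0 < \sum_c f c)%N ->
  (pole_poly (fun c => e c - f c)%N)`_(\sum_c e c)%N.-1 = (\sum_c f c == 1)%N%:R.
Proof.
move=> fe f_gt0; have fe_sum : (\sum_c f c <= \sum_c e c)%N by exact: leq_sum.
have size_ef : size (pole_poly (fun c => e c - f c)%N) = (\sum_c e c - \sum_c f c).+1.
  by rewrite size_pole_poly sumn_subn.
case: eqP => [f1|f_neq1].
  have /monicP <- := pole_poly_monic (fun c => e c - f c)%N.
  by rewrite lead_coefE size_ef f1; congr _`_ _; lia.
by rewrite nth_default // size_ef; lia.
Qed.

End PolePoly.

Lemma interpolation_expansion (F : fieldType) (k : nat) (x : 'I_k -> F)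
    (W : 'I_k -> {poly F}) :
  injective x -> (forall i, size (W i) <= k)%N ->
  (forall i j, i != j -> (W i).[x j] = 0) -> (forall i, (W i).[x i] != 0) ->
  forall p : {poly F}, (size p <= k)%N -> p = \sum_i (p.[x i] / (W i).[x i]) *: W i.
Proof.
move=> x_inj W_size W_off W_diag p p_size; apply/eqP; rewrite -subr_eq0; apply/eqP.
apply: (@roots_geq_poly_eq0 _ _ [seq x i | i <- enum 'I_k]).
- apply/allP => _ /mapP[j _ ->]; apply/eqP; rewrite hornerD hornerN horner_sum.
  rewrite (bigD1 j) //= big1 ?addr0 => [|i ij]; first by rewrite hornerZ divfK // subrr.
  by rewrite hornerZ (W_off _ _ ij) mulr0.
- by rewrite map_inj_uniq ?enum_uniq.
rewrite size_map size_enum_ord (leq_trans (size_add _ _)) // size_opp geq_max p_size.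
apply: (big_ind (fun q : {poly F} => size q <= k)%N) => [|q1 q2 h1 h2|i _].
- by rewrite size_poly0.
- by rewrite (leq_trans (size_add _ _)) // geq_max h1.
by rewrite (leq_trans (size_scale_leq _ _)).
Qed.

Lemma triangular_hankel_eq0 (F : idomainType) (k : nat) (l d : nat -> F) :
  l k.-1 != 0 -> (forall r, (r < k)%N -> \sum_(p < k - r) d p * l (p + r)%N = 0) ->
  forall p, (p < k)%N -> d p = 0.
Proof.
move=> l_top hom; elim/ltn_ind => p IH pk.
have /hom : (k.-1 - p < k)%N by lia.
rewrite (_ : (k - (k.-1 - p))%N = p.+1) ?big_ord_recr /=; last by lia.
rewrite big1 ?add0r => [|q _]; last by rewrite IH ?mul0r //=; have := ltn_ord q; lia.
rewrite subnKC; last by lia.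
by move/eqP; rewrite mulf_eq0 (negbTE l_top) orbF => /eqP.
Qed.

Section TwistZeros.
Variable R : realType.
Local Notation C := R[i].
Variables (S : finType) (m : S -> nat) (lev : S -> nat -> C) (zpos : S -> C) (linf : C).
Local Notation M := (\sum_(a : S) m a)%N.
Local Notation phi := (twist m lev zpos linf).
Local Notation phi' := (twist' m lev zpos).
Local Notation Pm := (pole_poly zpos m).

Lemma leq_delta_order a p : (p < m a)%N -> forall c, ((c == a) * p.+1 <= m c)%N.
Proof. by move=> pm c; case: eqP => [->|_]; rewrite ?mul1n ?mul0n. Qed.

Lemma leq_order_sum a : (m a <= M)%N.
Proof. by rewrite (bigD1 a) //= leq_addr. Qed.

Definition quotient_piece (a : S) (p t : nat) : {poly C} :=
  ('X - (zpos a)%:P) ^+ (p - t) * pole_poly zpos (fun c => m c - (c == a) * p.+1)%N.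

(* (Pm (phi - phi w)) / (X - w), obtained term by term from
   (z - c)^(p+1) - (w - c)^(p+1) = (z - w) sum_t (z - c)^(p-t) (w - c)^t. *)
Definition twist_quotient (w : C) : {poly C} :=
  \sum_a \sum_(p < m a) \sum_(t < p.+1)
    ((- lev a p / (w - zpos a) ^+ p.+1) * (w - zpos a) ^+ t) *: quotient_piece a p t.

Lemma size_quotient_piece a p t : (p < m a)%N -> (t <= p)%N ->
  size (quotient_piece a p t) = (M - t)%N.
Proof.
move=> pm tp; rewrite size_monicM ?monic_exp ?monicXsubC ?monic_neq0 ?pole_poly_monic //.
rewrite size_exp_XsubC size_pole_poly sumn_subn ?sumn_delta; last exact: leq_delta_order.
by have := leq_order_sum a; lia.
Qed.

Lemma horner_quotient_piece a p t z : (p < m a)%N -> (forall c, z != zpos c) ->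
  (quotient_piece a p t).[z] = (z - zpos a) ^+ (p - t) * (Pm.[z] / (z - zpos a) ^+ p.+1).
Proof.
move=> pm zpole; rewrite hornerM horner_exp hornerXsubC.
by rewrite horner_pole_poly_subn ?horner_pole_poly ?prodr_exp_delta //; exact: leq_delta_order.
Qed.

Lemma horner_twist_quotient_term w z a p : (p < m a)%N -> (forall c, z != zpos c) ->
  (\sum_(t < p.+1) ((- lev a p / (w - zpos a) ^+ p.+1) * (w - zpos a) ^+ t) *:
      quotient_piece a p t).[z] =
  (- lev a p / (w - zpos a) ^+ p.+1) * (Pm.[z] / (z - zpos a) ^+ p.+1) *
    \sum_(t < p.+1) (z - zpos a) ^+ (p - t) * (w - zpos a) ^+ t.
Proof.
move=> pm zpole; rewrite horner_sum mulr_sumr; apply: eq_bigr => t _.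
by rewrite hornerZ horner_quotient_piece //; ring.
Qed.

Lemma horner_twist_quotient w z : (forall c, w != zpos c) -> (forall c, z != zpos c) ->
  (z - w) * (twist_quotient w).[z] = Pm.[z] * (phi z - phi w).
Proof.
move=> wpole zpole; rewrite /twist opprB addrA subrK -sumrB mulr_sumr horner_sum mulr_sumr.
apply: eq_bigr => a _; rewrite -sumrB mulr_sumr horner_sum mulr_sumr; apply: eq_bigr => p _.
rewrite horner_twist_quotient_term //.
have geometric : (z - w) * \sum_(t < p.+1) (z - zpos a) ^+ (p - t) * (w - zpos a) ^+ t =
    (z - zpos a) ^+ p.+1 - (w - zpos a) ^+ p.+1.
  by rewrite subrXX; congr (_ * _); ring.
rewrite mulrCA geometric.
have wa : (w - zpos a) ^+ p.+1 != 0 by rewrite expf_neq0 ?subr_eq0.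
have za : (z - zpos a) ^+ p.+1 != 0 by rewrite expf_neq0 ?subr_eq0.
by field; rewrite wa za.
Qed.

Lemma horner_twist_quotient_diag w : (forall c, w != zpos c) ->
  (twist_quotient w).[w] = Pm.[w] * phi' w.
Proof.
move=> wpole; rewrite /twist' horner_sum mulr_sumr; apply: eq_bigr => a _.
rewrite horner_sum mulr_sumr; apply: eq_bigr => p _.
rewrite horner_twist_quotient_term //.
have wa : w - zpos a != 0 by rewrite subr_eq0.
rewrite (eq_bigr (fun _ => (w - zpos a) ^+ p)) => [|t _]; last first.
  by rewrite -exprD subnK // -ltnS.
rewrite sumr_const card_ord -mulr_natr !exprS.
by field; rewrite expf_neq0 ?wa.
Qed.

Lemma size_twist_quotient w : (size (twist_quotient w) <= M)%N.
Proof.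
apply: (leq_trans (size_sum _ _ _)); apply/bigmax_leqP => a _.
apply: (leq_trans (size_sum _ _ _)); apply/bigmax_leqP => p _.
apply: (leq_trans (size_sum _ _ _)); apply/bigmax_leqP => t _.
by rewrite (leq_trans (size_scale_leq _ _)) // size_quotient_piece ?leq_subr // -ltnS.
Qed.

Lemma coef_twist_quotient w : (twist_quotient w)`_M.-1 = - (phi w + linf).
Proof.
rewrite /twist subrK -sumrN coef_sum; apply: eq_bigr => a _.
rewrite -sumrN coef_sum; apply: eq_bigr => p _.
have := leq_order_sum a; have := ltn_ord p => pm aM.
rewrite coef_sum big_ord_recl [\sum_(i < p) _]big1 ?addr0 => [|t _]; last first.
  by rewrite lift0 coefZ nth_default ?mulr0 // size_quotient_piece //=; lia.
have top : (quotient_piece a p 0)`_M.-1 = 1.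
  have /monicP <- : quotient_piece a p 0 \is monic.
    by rewrite monicMr ?monic_exp ?monicXsubC ?pole_poly_monic.
  by rewrite lead_coefE size_quotient_piece // subn0.
by rewrite coefZ /= top expr0 !mulr1 mulNr.
Qed.

Variable zeta : 'I_M -> C.
Hypothesis linf_neq0 : linf != 0.
Hypothesis zeta_inj : injective zeta.
Hypothesis zeta_pole : forall i a, zeta i != zpos a.
Hypothesis zeta_root : forall i, phi (zeta i) = 0.
Hypothesis zeta_simple : forall i, phi' (zeta i) != 0.

Lemma horner_twist_quotient_zero i j : i != j -> (twist_quotient (zeta i)).[zeta j] = 0.
Proof.
move=> ij; have := horner_twist_quotient (zeta_pole i) (zeta_pole j).
rewrite !zeta_root subrr mulr0 => /eqP; rewrite mulf_eq0 subr_eq0 => /orP[/eqP ji|/eqP //].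
by rewrite (zeta_inj ji) eqxx in ij.
Qed.

Lemma coef_top_sum_zeros (p : {poly C}) : (size p <= M)%N ->
  p`_M.-1 = - linf * \sum_i p.[zeta i] / (Pm.[zeta i] * phi' (zeta i)).
Proof.
move=> p_size; have diag i := horner_twist_quotient_diag (zeta_pole i).
have diag_neq0 i : (twist_quotient (zeta i)).[zeta i] != 0.
  by rewrite diag mulf_neq0 ?horner_pole_poly_neq0.
rewrite {1}(interpolation_expansion zeta_inj (fun i => size_twist_quotient (zeta i))
  horner_twist_quotient_zero diag_neq0 p_size) coef_sum mulr_sumr.
by apply: eq_bigr => i _; rewrite coefZ coef_twist_quotient zeta_root add0r diag mulrC.
Qed.

Lemma sum_zeros_inv_pole_poly (f : S -> nat) : (forall c, f c <= m c)%N -> (0 < \sum_c f c)%N ->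
  \sum_i (phi' (zeta i) * (pole_poly zpos f).[zeta i])^-1 = (\sum_c f c == 1)%N%:R / - linf.
Proof.
move=> fm f_gt0; have size_mf := size_pole_poly zpos (fun c => m c - f c)%N.
rewrite sumn_subn // in size_mf.
have := @coef_top_sum_zeros (pole_poly zpos (fun c => m c - f c)%N).
have fm_sum : (\sum_c f c <= \sum_c m c)%N by exact: leq_sum.
rewrite size_mf coef_pole_poly_subn // => ->; last by lia.
rewrite mulrAC divff ?oppr_eq0 // mul1r; apply: eq_bigr => i _.
have Pf_neq0 := horner_pole_poly_neq0 f (zeta_pole i).
rewrite horner_pole_poly_subn ?zeta_pole //.
by field; rewrite Pf_neq0 zeta_simple horner_pole_poly_neq0 ?zeta_pole.
Qed.

Lemma sum_zeros_inv_two_poles a k b l :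
  (forall c, (c == a) * k + (c == b) * l <= m c)%N -> (0 < k + l)%N ->
  \sum_i (phi' (zeta i) * ((zeta i - zpos a) ^+ k * (zeta i - zpos b) ^+ l))^-1 =
  (k + l == 1)%N%:R / - linf.
Proof.
move=> klm kl_gt0; have := sum_zeros_inv_pole_poly klm.
rewrite big_split /= !sumn_delta => /(_ kl_gt0) <-; apply: eq_bigr => i _.
pose x c := zeta i - zpos c.
rewrite horner_pole_poly -(prodr_exp_delta x a k) -(prodr_exp_delta x b l) -big_split.
by congr (_ * _)^-1; apply: eq_bigr => c _; rewrite exprD.
Qed.

Definition zero_moment (a : S) (k : nat) : C :=
  \sum_i (phi' (zeta i) * (zeta i - zpos a) ^+ k)^-1.

Lemma zero_moment_low a k : (0 < k <= m a)%N -> zero_moment a k = (k == 1)%N%:R / - linf.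
Proof.
move=> /andP[k_gt0 km]; rewrite -[k in RHS]addn0 -(@sum_zeros_inv_two_poles a k a 0) ?addn0 //.
  by apply: eq_bigr => i _; rewrite expr0 mulr1.
by move=> c; rewrite muln0 addn0; case: eqP => [->|_]; rewrite ?mul1n ?mul0n.
Qed.

Lemma sum_zeros_inv_distinct_poles a k b l : a != b -> (0 < k <= m a)%N -> (0 < l <= m b)%N ->
  \sum_i (phi' (zeta i) * ((zeta i - zpos a) ^+ k * (zeta i - zpos b) ^+ l))^-1 = 0.
Proof.
move=> ab /andP[k_gt0 km] /andP[l_gt0 lm].
rewrite sum_zeros_inv_two_poles ?addn_gt0 ?k_gt0 //.
  by rewrite (_ : (_ == 1)%N = false) ?mul0r //; lia.
move=> c; case: (eqVneq c a) => [->|ca]; first by rewrite (negbTE ab) mul1n mul0n addn0.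
by case: (eqVneq c b) => [->|cb]; rewrite ?mul1n !mul0n.
Qed.

Lemma zero_moment_rec a k : (0 < k <= m a)%N ->
  \sum_(p < m a) lev a p * zero_moment a (k + p.+1) = - (k == 1)%N%:R.
Proof.
move=> /andP[k_gt0 km].
pose pair_sum c p :=
  \sum_i (phi' (zeta i) * ((zeta i - zpos a) ^+ k * (zeta i - zpos c) ^+ p.+1))^-1.
have expand : \sum_i (phi' (zeta i) * (zeta i - zpos a) ^+ k)^-1 * phi (zeta i) =
    \sum_c \sum_(p < m c) lev c p * pair_sum c p - linf * zero_moment a k.
  rewrite /zero_moment mulr_sumr.
  transitivity (\sum_i (\sum_c \sum_(p < m c) lev c p *
      (phi' (zeta i) * ((zeta i - zpos a) ^+ k * (zeta i - zpos c) ^+ p.+1))^-1 -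
      linf * (phi' (zeta i) * (zeta i - zpos a) ^+ k)^-1)).
    apply: eq_bigr => i _; rewrite /twist mulrBr mulr_sumr; congr (_ - _); last exact: mulrC.
    apply: eq_bigr => c _; rewrite mulr_sumr; apply: eq_bigr => p _.
    by rewrite !invfM; ring.
  rewrite sumrB exchange_big; congr (_ - _); apply: eq_bigr => c _.
  by rewrite exchange_big; apply: eq_bigr => p _; rewrite mulr_sumr.
have others : \sum_(c | c != a) \sum_(p < m c) lev c p * pair_sum c p = 0.
  rewrite big1 // => c ca; rewrite big1 // => p _.
  by rewrite /pair_sum sum_zeros_inv_distinct_poles ?mulr0 1?eq_sym ?k_gt0 ?km //=.
move: expand; rewrite big1 => [|i _]; last by rewrite zeta_root mulr0.
rewrite (bigD1 a) //= others addr0 zero_moment_low ?k_gt0 // => /eqP.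
rewrite eq_sym subr_eq0 => /eqP pair_sum_eq.
rewrite (eq_bigr (fun p : 'I_(m a) => lev a p * pair_sum a p)) => [|p _]; last first.
  by congr (_ * _); apply: eq_bigr => i _; rewrite exprD.
by rewrite pair_sum_eq mulrCA invrN mulrN divff // mulrN1.
Qed.

Lemma zero_moment_eta_system a r : (r < m a)%N ->
  \sum_(p < m a - r) - zero_moment a (p + (m a).-1).+2 * lev a (p + r)%N =
  ((m a).-1 == r)%N%:R.
Proof.
move=> rm; have := @zero_moment_rec a (m a - r); rewrite subn_gt0 rm leq_subr => /(_ isT).
rewrite -(big_mkord xpredT (fun p => lev a p * zero_moment a (m a - r + p.+1))).
rewrite (big_cat_nat (n := r) (leq0n r) (ltnW rm)) /= big_nat_cond big1 ?add0r => [|p]; last first.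
  move=> /andP[/andP[_ pr] _]; rewrite zero_moment_low; last by apply/andP; split; lia.
  by rewrite (_ : (_ == 1)%N = false) ?mul0r ?mulr0 //; lia.
rewrite -{1}[r]add0n big_addn big_mkord (_ : (m a - r == 1)%N = ((m a).-1 == r)); last first.
  by apply/eqP/eqP; lia.
move=> rec; rewrite -[RHS]opprK -rec -sumrN; apply: eq_bigr => p _; rewrite mulNr mulrC.
by congr (- (_ * zero_moment a _)); lia.
Qed.

Variable eta : S -> nat -> C.
Hypothesis lev_top : forall a, lev a (m a).-1 != 0.
Hypothesis eta_solves : eta_sol m lev eta.

Lemma eta_low a k : (k < (m a).-1)%N -> eta a k = 0.
Proof.
move=> k_low; have km : (k < m a)%N by lia.
have top : ((m a).-1 < m a)%N by lia.
have := eta_solves km top.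
rewrite (_ : (m a - (m a).-1)%N = 1%N) ?big_ord1 ?add0n; last by lia.
rewrite (_ : (k == (m a).-1) = false); last by apply/eqP; lia.
by move/eqP; rewrite mulf_eq0 (negbTE (lev_top a)) orbF => /eqP.
Qed.

Lemma eta_zero_moment a k : (k < (m a).-1 + m a)%N -> eta a k = - zero_moment a k.+2.
Proof.
move=> km; case: (ltnP k (m a).-1) => [k_low|k_high].
  rewrite eta_low // zero_moment_low; last by apply/andP; split; lia.
  by rewrite (_ : (_ == 1)%N = false) ?mul0r ?oppr0.
pose d p := eta a (p + (m a).-1)%N - - zero_moment a (p + (m a).-1).+2.
have d0 : forall p, (p < m a)%N -> d p = 0.
  apply: (triangular_hankel_eq0 (lev_top a)) => r rm.
  under eq_bigr do rewrite mulrBl.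
  by rewrite sumrB eta_solves ?zero_moment_eta_system ?subrr //; lia.
have /d0 : (k - (m a).-1 < m a)%N by lia.
by rewrite /d subnK // => /eqP; rewrite subr_eq0 => /eqP.
Qed.

Lemma sum_zeros_Qcoef a q b r : (q < m a)%N -> (r < m b)%N ->
  \sum_i - (2 * phi' (zeta i))^-1 * ((zeta i - zpos a) ^- q.+1 * (zeta i - zpos b) ^- r.+1) =
  (a == b)%:R * (2^-1 * eta a (q + r)%N).
Proof.
move=> qm rm.
transitivity (- 2^-1 * \sum_i
    (phi' (zeta i) * ((zeta i - zpos a) ^+ q.+1 * (zeta i - zpos b) ^+ r.+1))^-1).
  by rewrite mulr_sumr; apply: eq_bigr => i _; rewrite !invfM; ring.
case: (eqVneq a b) rm => [<-|ab] rm; last first.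
  by rewrite sum_zeros_inv_distinct_poles ?mulr0 ?mul0r //; apply/andP; split.
rewrite mul1r eta_zero_moment; last by lia.
rewrite mulNr mulrN; congr (- (_ * _)); apply: eq_bigr => i _.
by rewrite -exprD addSn addnS.
Qed.

End TwistZeros.

Lemma sum_scale_delta (K : pzRingType) (V : lmodType K) (S : finType) (k : S -> nat) a
    (c F : forall b, 'I_(k b) -> K) (G : forall b, 'I_(k b) -> V) :
  (forall b (q : 'I_(k b)), c b q = (a == b)%:R * F b q) ->
  \sum_b \sum_(q < k b) c b q *: G b q = \sum_(q < k a) F a q *: G a q.
Proof.
move=> cE; rewrite (bigD1 a) //= [X in _ + X]big1 ?addr0 => [|b ba].
  by apply: eq_bigr => q _; rewrite cE eqxx mul1r.
by rewrite big1 // => q _; rewrite cE eq_sym (negbTE ba) mul0r scale0r.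
Qed.

Section Observables.
Variables (R : realType) (n : nat) (br : 'rV[R[i]]_n -> 'rV[R[i]]_n -> 'rV[R[i]]_n).
Variables (A : comAlgType R[i]) (intD : (R -> A) -> A).
Hypothesis intD_linear : linear_int intD.

Lemma intD0 : intD (fun _ => 0) = 0.
Proof.
have := intD_linear 1 (fun _ => 0) (fun _ => 0).
have -> : (fun _ : R => 1 *: (0 : A) + 0) = (fun _ => 0).
  by apply: funext => x; rewrite scaler0 addr0.
by rewrite scale1r -[LHS]addr0 => /addrI <-.
Qed.

Lemma intDZ c (F : R -> A) : intD (fun x => c *: F x) = c *: intD F.
Proof.
have := intD_linear c F (fun _ => 0); rewrite intD0 addr0 => <-.
by congr intD; apply: funext => x; rewrite addr0.
Qed.

Lemma intD_sum (I : Type) (r : seq I) (P : pred I) (F : I -> R -> A) :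
  intD (fun x => \sum_(i <- r | P i) F i x) = \sum_(i <- r | P i) intD (F i).
Proof.
elim: r => [|j r IH].
  by rewrite big_nil -[RHS]intD0; congr intD; apply: funext => x; rewrite big_nil.
rewrite big_cons -IH.
have -> : (fun x => \sum_(i <- j :: r | P i) F i x) = (fun x =>
    if P j then F j x + \sum_(i <- r | P i) F i x else \sum_(i <- r | P i) F i x).
  by apply: funext => x; rewrite big_cons.
case: (P j) => //; have := intD_linear 1 (F j) (fun x => \sum_(i <- r | P i) F i x).
by rewrite scale1r => <-; congr intD; apply: funext => x; rewrite scale1r.
Qed.

Lemma kappaA_suml (I : Type) (r : seq I) (P : pred I) (X : I -> 'rV[A]_n) (Y : 'rV[A]_n) :
  kappaA br (\sum_(i <- r | P i) X i) Y = \sum_(i <- r | P i) kappaA br (X i) Y.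
Proof.
rewrite /kappaA [RHS]exchange_big; apply: eq_bigr => c _; rewrite [RHS]exchange_big.
by apply: eq_bigr => d _; rewrite summxE mulr_suml scaler_sumr.
Qed.

Lemma kappaA_sumr (I : Type) (r : seq I) (P : pred I) (X : 'rV[A]_n) (Y : I -> 'rV[A]_n) :
  kappaA br X (\sum_(i <- r | P i) Y i) = \sum_(i <- r | P i) kappaA br X (Y i).
Proof.
rewrite /kappaA [RHS]exchange_big; apply: eq_bigr => c _; rewrite [RHS]exchange_big.
by apply: eq_bigr => d _; rewrite summxE mulr_sumr scaler_sumr.
Qed.

Lemma kappaA_scalel (s : A) (X Y : 'rV[A]_n) : kappaA br (s *: X) Y = s * kappaA br X Y.
Proof.
rewrite /kappaA mulr_sumr; apply: eq_bigr => c _; rewrite mulr_sumr; apply: eq_bigr => d _.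
by rewrite mxE -mulrA scalerAr.
Qed.

Lemma kappaA_scaler (s : A) (X Y : 'rV[A]_n) : kappaA br X (s *: Y) = s * kappaA br X Y.
Proof.
rewrite /kappaA mulr_sumr; apply: eq_bigr => c _; rewrite mulr_sumr; apply: eq_bigr => d _.
by rewrite mxE mulrCA scalerAr.
Qed.

Variables (S : finType) (m : S -> nat) (zpos : S -> R[i]) (J : S -> nat -> R -> 'rV[A]_n).

Lemma int_kappa_Gamma w :
  intD (fun x => kappaA br (Gamma m zpos J w x) (Gamma m zpos J w x)) =
  \sum_a \sum_(p < m a) \sum_b \sum_(q < m b)
    ((w - zpos a) ^- p.+1 * (w - zpos b) ^- q.+1) *:
      intD (fun x => kappaA br (J a p x) (J b q x)).
Proof.
have expand x : kappaA br (Gamma m zpos J w x) (Gamma m zpos J w x) =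
    \sum_a \sum_(p < m a) \sum_b \sum_(q < m b)
      ((w - zpos a) ^- p.+1 * (w - zpos b) ^- q.+1) *: kappaA br (J a p x) (J b q x).
  rewrite /Gamma kappaA_suml; apply: eq_bigr => a _; rewrite kappaA_suml; apply: eq_bigr => p _.
  rewrite kappaA_scalel kappaA_sumr mulr_sumr; apply: eq_bigr => b _.
  rewrite kappaA_sumr mulr_sumr; apply: eq_bigr => q _.
  by rewrite kappaA_scaler !mulr_algl scalerA.
rewrite (funext expand) intD_sum; apply: eq_bigr => a _.
rewrite intD_sum; apply: eq_bigr => p _; rewrite intD_sum; apply: eq_bigr => b _.
by rewrite intD_sum; apply: eq_bigr => q _; rewrite intDZ.
Qed.

Lemma sum_scaled_int_kappa_Gamma (I : finType) (c w : I -> R[i]) :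
  \sum_i c i *: intD (fun x => kappaA br (Gamma m zpos J (w i) x) (Gamma m zpos J (w i) x)) =
  \sum_a \sum_(p < m a) \sum_b \sum_(q < m b)
    (\sum_i c i * ((w i - zpos a) ^- p.+1 * (w i - zpos b) ^- q.+1)) *:
      intD (fun x => kappaA br (J a p x) (J b q x)).
Proof.
under eq_bigr do rewrite int_kappa_Gamma scaler_sumr.
rewrite exchange_big; apply: eq_bigr => a _; under eq_bigr do rewrite scaler_sumr.
rewrite exchange_big; apply: eq_bigr => p _; under eq_bigr do rewrite scaler_sumr.
rewrite exchange_big; apply: eq_bigr => b _; under eq_bigr do rewrite scaler_sumr.
rewrite exchange_big; apply: eq_bigr => q _.
by rewrite scaler_suml; apply: eq_bigr => i _; rewrite scalerA.
Qed.

End Observables.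

Theorem proposition2p3
  (R : realType) (n : nat) (br : 'rV[R[i]]_n -> 'rV[R[i]]_n -> 'rV[R[i]]_n)
  (tau : 'rV[R[i]]_n -> 'rV[R[i]]_n)
  (A : comAlgType R[i]) (pb : A -> A -> A) (cj : A -> A)
  (Dk : option R) (intD : (R -> A) -> A)
  (S : finType) (bar : S -> S) (m : S -> nat) (lev : S -> nat -> R[i])
  (zpos : S -> R[i]) (linf : R[i])
  (J : S -> nat -> R -> 'rV[A]_n)
  (eta : S -> nat -> R[i])
  (zeta : 'I_(\sum_a m a) -> R[i]) (P : A) :
  (* the Lie algebra and its real form *)
  is_simple_lie br ->
  is_real_form_inv br tau ->
  (* the algebra of observables *)
  is_poisson pb -> is_conjA cj -> linear_int intD ->
  (forall L, Dk = Some L -> 0 < L) ->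
  (* the data of the model *)
  site_data bar m lev zpos linf ->
  (* the realisation *)
  (forall L a p x, Dk = Some L -> (p < m a)%N -> J a p (x + L) = J a p x) ->
  current_brackets Dk br pb intD m lev J ->
  (forall a p x, (p < m a)%N -> tauA cj tau (J a p x) = J (bar a) p x) ->
  (* eta^alpha_[p] *)
  eta_sol m lev eta ->
  (* zeta_1, ..., zeta_M are the zeros of phi, all simple *)
  injective zeta ->
  (forall i a, zeta i != zpos a) ->
  (forall i, twist m lev zpos linf (zeta i) = 0) ->
  (forall i, twist' m lev zpos (zeta i) != 0) ->
  (forall z, (forall a, z != zpos a) -> twist m lev zpos linf z = 0 ->
     exists i, z = zeta i) ->
  (* P is the momentum, and the realisation is suitable *)
  is_momentum Dk br pb intD m J P ->
  \sum_a Dcharge0 br intD m eta J a = P ->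
  P = \sum_i Qcharge br intD m lev zpos J (zeta i).
Proof.
move=> _ _ _ _ intD_linear _ [_ _ _ [m_lev _] [_ linf_neq0]] _ _ _ eta_solves
  zeta_inj zeta_pole zeta_root zeta_simple _ _ suitable.
have lev_top a : lev a (m a).-1 != 0 by have [] := m_lev a.
rewrite -suitable /Qcharge sum_scaled_int_kappa_Gamma //; apply: eq_bigr => a _.
rewrite /Dcharge0 scaler_sumr; apply: eq_bigr => p _.
have coef b (q : 'I_(m b)) := sum_zeros_Qcoef linf_neq0 zeta_inj zeta_pole zeta_root
  zeta_simple lev_top eta_solves (ltn_ord p) (ltn_ord q).
rewrite [RHS](sum_scale_delta _ coef) scaler_sumr.
by apply: eq_bigr => q _; rewrite scalerA.
Qed.
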